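(* Let $G$ be an oriented graph derived from a Burling tree $T$ and let $uv$ be a top arc of $G$ with respect to $T$ such that $u$ is a source of $G$. Let $G'$ be obtained from $G$ by top-subdividing $uv$ (removing the arc $uv$ and adding a new vertex $w$ with arcs $wv$ and $wu$). Then $G'$ can be derived from a Burling tree $T'$ in such a way that, with respect to $T'$: $wv$ is a top arc of $G'$; $wu$ is a bottom arc of $G'$; every top arc of $G$ with respect to $T$ other than $uv$ is a top arc of $G'$; and every bottom arc of $G$ with respect to $T$ other than $uv$ is a bottom arc of $G'$.
   Context: Oriented graphs are finite, without loops, multiple arcs or pairs of opposite arcs. In a rooted tree $T$ with root $r$, each non-root vertex $v$ has a parent $p(v)$; children, leaves, ancestors and descendants are as usual. A branch is a sequence $v_1\dots v_k$ ($k\ge0$) with $v_i$ the parent of $v_{i+1}$; it starts at $v_1$. A Burling tree is a 4-tuple $(T,r,\ell,c)$: $T$ a rooted tree with root $r$; $\ell$ assigns to each non-leaf vertex $v$ one of its children $\ell(v)$ (the last-born of $v$); $c$ assigns to every vertex $v$ that is neither the root nor a last-born the vertex-set of a (possibly empty) branch starting at $\ell(p(v))$, and $c(v)=\emptyset$ if $v$ is the root or a last-born. The oriented graph fully derived from it has vertex-set $V(T)$ and an arc $uv$ iff $v\in c(u)$; an oriented graph is derived from the Burling tree if it is an induced subgraph of the fully derived one. If $G$ is derived from $T$ and $uv$ is an arc of $G$, then all out-neighbors of $u$ lie on one branch of $T$; $uv$ is a top arc with respect to $T$ if $v$ is the out-neighbor of $u$ closest in $T$ to the root, and a bottom arc with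 respect to $T$ if $v$ is the out-neighbor of $u$ furthest in $T$ from the root. *)

From mathcomp Require Import all_boot.
Set Implicit Arguments.
Unset Strict Implicit.
Unset Printing Implicit Defensive.

Record burling_tree (B : finType) := BurlingTree {
  bt_root : B;
  bt_par  : B -> option B;      (* parent; None exactly at the root *)
  bt_last : B -> option B;      (* last-born child; None exactly at leaves *)
  bt_c    : B -> {set B}
}.

Section Burling.
Variables (B : finType) (T : burling_tree B).

Definition piter (n : nat) (x : B) : option B :=
  iter n (fun o => obind (bt_par T) o) (Some x).

Definition depth_is (x : B) (n : nat) : Prop := piter n x = Some (bt_root T).

Definition is_last_born (x : B) : Prop := exists v, bt_last T v = Some x.

Definition branch_set_from (s : B) (S : {set B}) : Prop :=
  S = set0 \/
  exists p : seq B,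
    path (fun a b => bt_par T b == Some a) s p /\ S = [set x in s :: p].

Definition is_burling_tree : Prop :=
  [/\ [/\ bt_par T (bt_root T) = None,
      (forall v, v <> bt_root T -> bt_par T v <> None) &
      (forall v, exists n, depth_is v n)],
      (forall v, match bt_last T v with
                 | Some l => bt_par T l = Some v
                 | None => forall x, bt_par T x <> Some v
                 end),
      (forall v, (v = bt_root T \/ is_last_born v) -> bt_c T v = set0) &
      (forall v p l, bt_par T v = Some p -> bt_last T p = Some l -> l <> v ->
         branch_set_from l (bt_c T v))].

End Burling.

Definition oriented (V : finType) (a : rel V) : Prop :=
  (forall x, ~~ a x x) /\ (forall x y, a x y -> ~~ a y x).

(* (V, a) is derived from T via the embedding f: it is isomorphic (via f) to
   the induced subgraph of the fully derived graph on f(V). *)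
Definition derived_via (B V : finType) (T : burling_tree B) (a : rel V)
    (f : V -> B) : Prop :=
  injective f /\ forall x y, a x y = (f y \in bt_c T (f x)).

Definition top_arc (B V : finType) (T : burling_tree B) (a : rel V)
    (f : V -> B) (x y : V) : Prop :=
  a x y /\ forall z n m, a x z -> depth_is T (f y) n -> depth_is T (f z) m -> n <= m.

Definition bottom_arc (B V : finType) (T : burling_tree B) (a : rel V)
    (f : V -> B) (x y : V) : Prop :=
  a x y /\ forall z n m, a x z -> depth_is T (f y) n -> depth_is T (f z) m -> m <= n.

Definition is_source (V : finType) (a : rel V) (u : V) : Prop :=
  forall x, ~~ a x u.

(* Top-subdivision of the arc u v: vertex set option V, new vertex w = None;
   remove uv, add arcs w v and w u. *)
Definition top_subdivide (V : finType) (a : rel V) (u v : V) : rel (option V) :=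
  fun x y =>
    match x, y with
    | Some x', Some y' => a x' y' && ~~ ((x' == u) && (y' == v))
    | None, Some y' => (y' == v) || (y' == u)
    | _, None => false
    end.

From mathcomp Require Import all_boot.
Set Implicit Arguments.
Unset Strict Implicit.
Unset Printing Implicit Defensive.

(** The new tree stretches [T]: every vertex [x] moves to twice its depth and
   gets a new last-born child [x+], which adopts all former children of [x],
   and a new leaf [x*].  A branch of [T] lifts to a branch of the stretched
   tree by interleaving the [x+], so all arcs of [G] survive with doubled
   depths, and top and bottom arcs are preserved.  Let [P] be the parent of
   [u] and [c(u) = r1 ++ v :: r2]; since [uv] is a top arc, [r1] contains no
   vertex of [G].  The new vertex [w] becomes [P*], whose branch runs from
   [P+] through [r1] down to [v] and then [v*], and [u] moves to [v*], whose
   branch is [v+] followed by the lift of [r2].  So [w] sees exactly [v], at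
   depth [2 d(v)], and [u], at depth [2 d(v) + 1]. *)

Section Depth.
Variables (B : finType) (T : burling_tree B).

Definition is_parent : rel B := fun x y => bt_par T y == Some x.

Lemma piterD n m x : piter T (n + m) x = obind (piter T n) (piter T m x).
Proof.
rewrite /piter iterD; case: (iter m _ _) => [y|] //=.
by elim: n => //= n ->.
Qed.

Lemma depth_is_uniq x n m : bt_par T (bt_root T) = None ->
  depth_is T x n -> depth_is T x m -> n = m.
Proof.
move=> root_par.
wlog le_nm : n m / n <= m => [sym|].
  by case/orP: (leq_total n m) => le Hn Hm; [|symmetry]; apply: sym.
rewrite /depth_is => Hn; rewrite -(subnK le_nm) piterD Hn /=.
by case: (m - n) => [|k] //; rewrite -addn1 piterD /= root_par.
Qed.

Lemma depth_is_child x y n : bt_par T y = Some x -> depth_is T x n ->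
  depth_is T y n.+1.
Proof. by move=> Hy Hx; rewrite /depth_is -addn1 piterD /= Hy. Qed.

Hypothesis HT : is_burling_tree T.

Lemma depth_exists x : exists n, piter T n x == Some (bt_root T).
Proof. by case: HT => [[_ _ /(_ x) [n /eqP Hn]] _ _ _]; exists n. Qed.

Definition depth x : nat := ex_minn (depth_exists x).

Lemma depthP x : depth_is T x (depth x).
Proof. by rewrite /depth; case: (ex_minnP (depth_exists x)) => n /eqP. Qed.

Lemma depth_isE x n : depth_is T x n -> n = depth x.
Proof.
case: HT => [[root_par _ _] _ _ _] Hn.
exact: depth_is_uniq root_par Hn (depthP x).
Qed.

Lemma depth_child x y : bt_par T y = Some x -> depth y = (depth x).+1.
Proof. by move=> Hy; rewrite -(depth_isE (depth_is_child Hy (depthP x))). Qed.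

Lemma path_depth p q : path is_parent p q -> path (relpre depth ltn) p q.
Proof. by apply: sub_path => x y /eqP /depth_child /= ->. Qed.

Definition last_sibling x : B := odflt x (obind (bt_last T) (bt_par T x)).

Definition branch_seq (s : B) (q : seq B) : Prop :=
  q = [::] \/ exists2 q', q = s :: q' & path is_parent s q'.

Lemma c_nonempty_par x y : y \in bt_c T x -> exists p, bt_par T x = Some p.
Proof.
case: HT => [[_ nonroot_par _] _ c_root_last _] y_cx.
case: (eqVneq x (bt_root T)) => [x_root|/eqP x_nonroot].
  by move: y_cx; rewrite c_root_last ?inE //; left.
by case: (bt_par T x) (nonroot_par x x_nonroot) => [p _|//]; exists p.
Qed.

Lemma c_branch_seq x :
  exists q, bt_c T x = [set z in q] /\ branch_seq (last_sibling x) q.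
Proof.
case: HT => [_ last_par c_root_last c_branch].
have [c0|/set0Pn [y y_cx]] := eqVneq (bt_c T x) set0.
  by exists [::]; split; [apply/setP => z; rewrite c0 !inE | left].
have [p Ep] := c_nonempty_par y_cx.
have := last_par p; case El: (bt_last T p) => [l|] l_par; last first.
  by have := l_par x; rewrite Ep.
have l_neq_x : l <> x.
  move=> l_x; move: y_cx; rewrite c_root_last ?inE //.
  by right; exists p; rewrite El l_x.
have [c0|[q' [Hq' ->]]] := c_branch x p l Ep El l_neq_x.
  by rewrite c0 inE in y_cx.
exists (l :: q'); split => //.
by right; exists q'; rewrite // /last_sibling Ep /= El.
Qed.

Lemma branch_seq_path x p q : bt_par T x = Some p ->
  branch_seq (last_sibling x) q -> path is_parent p q.
Proof.
case: HT => [_ last_par _ _] Ep [->|[q' -> Hq']] //=.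
rewrite Hq' andbT /last_sibling Ep /=.
have := last_par p; case: (bt_last T p) => [l /eqP //|no_child].
by have := no_child x; rewrite Ep.
Qed.

End Depth.

Section Stretch.
Variables (B : finType) (T : burling_tree B).
Local Notation B2 := (B * option bool)%type.

(* [(x, None)] is [x], [(x, Some false)] is [x+], [(x, Some true)] is [x*]. *)

Definition stretch_par (y : B2) : option B2 :=
  match y with
  | (x, None) => omap (fun p => (p, Some false)) (bt_par T x)
  | (x, Some _) => Some (x, None)
  end.

Definition stretch_last (y : B2) : option B2 :=
  match y with
  | (x, None) => Some (x, Some false)
  | (x, Some false) => omap (fun l => (l, None)) (bt_last T x)
  | (_, Some true) => None
  end.

Fixpoint stretch_seq (q : seq B) : seq B2 :=
  if q is x :: q' then (x, None) :: (x, Some false) :: stretch_seq q' else [::].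

Definition stretch_c (Q : B -> seq B) (leaf_c : B -> {set B2}) (y : B2) :=
  match y with
  | (x, None) => [set z in stretch_seq (Q x)]
  | (_, Some false) => set0
  | (x, Some true) => leaf_c x
  end.

Definition stretched_tree Q leaf_c : burling_tree B2 :=
  BurlingTree (bt_root T, None) stretch_par stretch_last (stretch_c Q leaf_c).

Lemma mem_stretch_seq_None y q :
  ((y, None) \in stretch_seq q) = (y \in q).
Proof. by elim: q => //= x q IH; rewrite !inE IH !xpair_eqE andbT andbF. Qed.

Lemma mem_stretch_seq_leaf y q : ((y, Some true) \in stretch_seq q) = false.
Proof. by elim: q => //= x q IH; rewrite !inE IH !xpair_eqE !andbF. Qed.

Lemma last_stretch_seq p q :
  last (p, Some false) (stretch_seq q) = (last p q, Some false).
Proof. by elim: q p => //= x q IH p; rewrite IH. Qed.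

Variables (Q : B -> seq B) (leaf_c : B -> {set B2}).
Local Notation T' := (stretched_tree Q leaf_c).

Lemma path_stretch_seq p q : path (is_parent T) p q ->
  path (is_parent T') (p, Some false) (stretch_seq q).
Proof.
elim: q p => //= x q IH p /andP [/eqP x_par q_path].
by rewrite /is_parent /= x_par !eqxx IH.
Qed.

Lemma piter_stretched_double n x :
  piter T' n.*2 (x, None) = omap (fun y => (y, None)) (piter T n x).
Proof.
elim: n => //= n IH.
change (piter T' n.*2.+2 (x, None)) with
  (obind stretch_par (obind stretch_par (piter T' n.*2 (x, None)))).
by rewrite IH /piter /=; case: (iter n _ _) => //= y; case: (bt_par T y).
Qed.

Lemma depth_is_stretched x n : depth_is T x n -> depth_is T' (x, None) n.*2.
Proof. by rewrite /depth_is piter_stretched_double => ->. Qed.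

Lemma depth_is_stretched_Some x b n :
  depth_is T x n -> depth_is T' (x, Some b) n.*2.+1.
Proof.
by move=> Hx; rewrite /depth_is -addn1 piterD; apply: depth_is_stretched.
Qed.

Hypothesis HT : is_burling_tree T.

Lemma stretched_root_par : bt_par T' (bt_root T') = None.
Proof. by case: HT => [[/= -> _ _] _ _ _]. Qed.

Lemma depth_is_stretchedE x n :
  depth_is T' (x, None) n -> n = (depth HT x).*2.
Proof.
move=> Hn; apply: depth_is_uniq stretched_root_par Hn _.
exact/depth_is_stretched/depthP.
Qed.

Lemma depth_is_stretchedE_Some x b n :
  depth_is T' (x, Some b) n -> n = (depth HT x).*2.+1.
Proof.
move=> Hn; apply: depth_is_uniq stretched_root_par Hn _.
exact/depth_is_stretched_Some/depthP.
Qed.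

End Stretch.

Section StretchBurling.
Variables (B : finType) (T : burling_tree B) (Q : B -> seq B).
Variable leaf_c : B -> {set B * option bool}.
Local Notation T' := (stretched_tree T Q leaf_c).
Hypothesis HT : is_burling_tree T.
Hypothesis HQ : forall x,
  bt_c T x = [set z in Q x] /\ branch_seq T (last_sibling T x) (Q x).
Hypothesis Hleaf : forall x, branch_set_from T' (x, Some false) (leaf_c x).

Lemma stretched_rooted :
  [/\ bt_par T' (bt_root T') = None,
      (forall y, y <> bt_root T' -> bt_par T' y <> None) &
      (forall y, exists n, depth_is T' y n)].
Proof.
split; first exact: stretched_root_par.
  case: HT => [[_ nonroot_par _] _ _ _] [x [b|]] //= y_nonroot.
  have x_nonroot : x <> bt_root T.
    by move=> x_root; apply: y_nonroot; rewrite x_root.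
  by case: (bt_par T x) (nonroot_par x x_nonroot).
move=> [x [b|]]; have Hx := depthP HT x.
  by exists (depth HT x).*2.+1; apply: depth_is_stretched_Some.
by exists (depth HT x).*2; apply: depth_is_stretched.
Qed.

Lemma stretched_last_born y :
  match bt_last T' y with
  | Some l => bt_par T' l = Some y
  | None => forall z, bt_par T' z <> Some y
  end.
Proof.
case: HT => [_ last_par _ _]; case: y => [x [[|]|]] //=.
- by move=> [z [b|]] //=; case: (bt_par T z).
- case: (bt_last T x) (last_par x) => [l /= -> //|no_child].
  move=> [z [b|]] //=; case Ez: (bt_par T z) => [p|] //= [p_x].
  by apply: (no_child z); rewrite Ez p_x.
Qed.

Lemma stretched_c_root_last y :
  y = bt_root T' \/ is_last_born T' y -> bt_c T' y = set0.
Proof.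
have stretch_c0 x : bt_c T x = set0 -> [set z in stretch_seq (Q x)] = set0.
  case: (HQ x) => -> _; case: (Q x) => [|z q] c0.
    by apply/setP => z; rewrite !inE.
  by have := in_set0 z; rewrite -c0 inE mem_head.
case: HT => [_ _ c_root_last _] [->|[[z [[|]|]] /= last_y]].
- by apply: stretch_c0; apply: c_root_last; left.
- by [].
- case El: (bt_last T z) last_y => [l|] // [<-].
  by apply: stretch_c0; apply: c_root_last; right; exists z.
- by case: last_y => <-.
Qed.

Lemma stretch_seq_branch s q : branch_seq T s q ->
  branch_set_from T' (s, None) [set z in stretch_seq q].
Proof.
case=> [->|[q' -> q'_path]]; first by left; apply/setP => z; rewrite !inE.
right; exists ((s, Some false) :: stretch_seq q').
by rewrite /= /is_parent eqxx path_stretch_seq.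
Qed.

Lemma stretched_c_branch y p l :
  bt_par T' y = Some p -> bt_last T' p = Some l -> l <> y ->
  branch_set_from T' l (bt_c T' y).
Proof.
case: y => [x [[|]|]] /=.
- by move=> [<-] [<-] _; apply: Hleaf.
- by move=> [<-] [<-].
case Ep: (bt_par T x) => [px|] //= [<-] /=.
case El: (bt_last T px) => [lx|] //= [<-] _.
by have [_] := HQ x; rewrite /last_sibling Ep /= El; apply: stretch_seq_branch.
Qed.

Lemma stretched_tree_burling : is_burling_tree T'.
Proof.
split; [exact: stretched_rooted | exact: stretched_last_born |
        exact: stretched_c_root_last | exact: stretched_c_branch].
Qed.

End StretchBurling.

Section TopSubdivision.
Variables (B V : finType) (T : burling_tree B) (a : rel V) (f : V -> B).
Variables u v : V.
Hypotheses (HT : is_burling_tree T) (Hf : derived_via T a f).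
Hypotheses (uv_top : top_arc T a f u v) (u_source : is_source a u).
Variable Q : B -> seq B.
Hypothesis HQ : forall x,
  bt_c T x = [set z in Q x] /\ branch_seq T (last_sibling T x) (Q x).
Variables (P : B) (r1 r2 : seq B).
Hypotheses (u_par : bt_par T (f u) = Some P) (Q_u : Q (f u) = r1 ++ f v :: r2).

Local Notation depth := (depth HT).
Local Notation a' := (top_subdivide a u v).

Lemma derived_arcE x y : a x y = (f y \in Q (f x)).
Proof. by case: Hf => _ ->; case: (HQ (f x)) => ->; rewrite inE. Qed.

Lemma u_branch_path : path (is_parent T) P (r1 ++ f v :: r2).
Proof. by rewrite -Q_u; apply: branch_seq_path u_par (HQ _).2. Qed.

Lemma u_branch_depths :
  [/\ depth P < depth (f v), {in r1, forall y, depth y < depth (f v)} &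
      {in r2, forall y, depth (f v) < depth y}].
Proof.
have lt_trans : transitive (relpre depth ltn) by move=> ? ? ?; apply: ltn_trans.
move: (path_depth HT u_branch_path); rewrite path_sortedE // sorted_pairwise //.
rewrite pairwise_cat pairwise_cons => /andP [/allP above_P].
case/and3P=> [r1_fv _ /andP [/allP r2_fv _]].
split; first by apply: above_P; rewrite mem_cat mem_head orbT.
  by move=> y y_r1; apply: (allrelP r1_fv) (mem_head _ _).
by move=> y /r2_fv.
Qed.

Lemma P_neq_fv : P != f v.
Proof.
case: u_branch_depths => lt_P _ _.
by apply: contraTneq lt_P => ->; rewrite ltnn.
Qed.

Lemma fv_notin_r2 : f v \notin r2.
Proof.
by case: u_branch_depths => _ _ r2_deep; apply/negP => /r2_deep; rewrite ltnn.
Qed.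

Lemma image_notin_r1 y : f y \notin r1.
Proof.
apply/negP => fy_r1; case: u_branch_depths => _ r1_shallow _.
have auy : a u y by rewrite derived_arcE Q_u mem_cat fy_r1.
have := uv_top.2 y _ _ auy (depthP HT _) (depthP HT _).
by rewrite leqNgt r1_shallow.
Qed.

Lemma arc_from_u y : a u y = (y == v) || (f y \in r2).
Proof.
rewrite derived_arcE Q_u mem_cat (negbTE (image_notin_r1 y)) inE.
by rewrite (inj_eq Hf.1).
Qed.

Definition subdiv_leaf_c (x : B) : {set B * option bool} :=
  if x == f v then [set z in (f v, Some false) :: stretch_seq r2]
  else if x == P then
    [set z in (P, Some false)
              :: stretch_seq r1 ++ [:: (f v, None); (f v, Some true)]]
  else set0.

Definition subdiv_tree := stretched_tree T Q subdiv_leaf_c.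

Definition subdiv_map (x : option V) : B * option bool :=
  match x with
  | None => (P, Some true)
  | Some x => if x == u then (f v, Some true) else (f x, None)
  end.

Local Notation T' := subdiv_tree.
Local Notation f' := subdiv_map.

Lemma subdiv_leaf_branch x :
  branch_set_from T' (x, Some false) (subdiv_leaf_c x).
Proof.
move: u_branch_path; rewrite cat_path => /and3P [r1_path /eqP fv_par r2_path].
rewrite /subdiv_leaf_c; case: eqP => [->|_].
  by right; exists (stretch_seq r2); split => //; apply: path_stretch_seq.
case: eqP => [->|_]; last by left.
right; exists (stretch_seq r1 ++ [:: (f v, None); (f v, Some true)]).
split=> //; rewrite cat_path path_stretch_seq // last_stretch_seq /=.
by rewrite /is_parent /= fv_par !eqxx.
Qed.

Lemma subdiv_tree_burling : is_burling_tree T'.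
Proof. exact: stretched_tree_burling HT HQ subdiv_leaf_branch. Qed.

Lemma subdiv_map_inj : injective f'.
Proof.
have fv_neq_P : f v != P by rewrite eq_sym P_neq_fv.
move=> [x|] [y|] /=; do ?case: eqP => [->|_]; move=> // [].
- by move=> /Hf.1 ->.
- by move=> fv_P; rewrite fv_P eqxx in fv_neq_P.
- by move=> P_fv; rewrite P_fv eqxx in fv_neq_P.
Qed.

Lemma subdiv_arcs_from_new y : a' None y = (f' y \in bt_c T' (f' None)).
Proof.
rewrite /= /subdiv_leaf_c (negbTE P_neq_fv) eqxx inE /= !inE mem_cat !inE.
case: y => [y|] /=.
  case: (eqVneq y u) => [->|y_nu]; first by rewrite !eqxx !orbT.
  rewrite mem_stretch_seq_None (negbTE (image_notin_r1 y)) !xpair_eqE.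
  rewrite (inj_eq Hf.1).
  by rewrite andbT !andbF !orbF.
by rewrite mem_stretch_seq_leaf !xpair_eqE (negbTE P_neq_fv) !andbF.
Qed.

Lemma subdiv_arcs_from_u y : a' (Some u) y = (f' y \in bt_c T' (f' (Some u))).
Proof.
rewrite /= eqxx /= /subdiv_leaf_c eqxx !inE.
case: y => [y|] /=; last by rewrite mem_stretch_seq_leaf xpair_eqE andbF.
case: (eqVneq y u) => [->|y_nu].
  by rewrite (negbTE (u_source u)) mem_stretch_seq_leaf xpair_eqE andbF.
rewrite mem_stretch_seq_None xpair_eqE andbF arc_from_u.
by case: (eqVneq y v) => [->|]; rewrite ?(negbTE fv_notin_r2) ?andbT.
Qed.

Lemma subdiv_arcs_from_old x y :
  x != u -> a' (Some x) y = (f' y \in bt_c T' (f' (Some x))).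
Proof.
move=> /negbTE x_nu; rewrite /= x_nu /= inE.
case: y => [y|] /=; last by rewrite mem_stretch_seq_leaf.
case: eqP => [->|_].
  by rewrite mem_stretch_seq_leaf (negbTE (u_source x)).
by rewrite mem_stretch_seq_None derived_arcE andbT.
Qed.

Lemma subdiv_derived : derived_via T' a' f'.
Proof.
split=> [|[x|] y]; first exact: subdiv_map_inj.
  case: (eqVneq x u) => [->|x_nu]; first exact: subdiv_arcs_from_u.
  exact: subdiv_arcs_from_old.
exact: subdiv_arcs_from_new.
Qed.

Lemma arc_head_neq_u x y : a x y -> y != u.
Proof. by apply: contraTneq => ->; apply: u_source. Qed.

Lemma depth_is_subdiv_old y n :
  y != u -> depth_is T' (f' (Some y)) n -> n = (depth (f y)).*2.
Proof. by move=> /negbTE y_nu; rewrite /= y_nu; apply: depth_is_stretchedE. Qed.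

Lemma depth_is_subdiv_u n :
  depth_is T' (f' (Some u)) n -> n = (depth (f v)).*2.+1.
Proof. by rewrite /= eqxx; apply: depth_is_stretchedE_Some. Qed.

Lemma subdiv_top_arc_new : top_arc T' a' f' None (Some v).
Proof.
have v_nu := arc_head_neq_u uv_top.1.
split=> [|[z|] n m //= /orP [] /eqP ->]; first by rewrite /= eqxx.
  by move=> /(depth_is_subdiv_old v_nu) -> /(depth_is_subdiv_old v_nu) ->.
by move=> /(depth_is_subdiv_old v_nu) -> /depth_is_subdiv_u ->.
Qed.

Lemma subdiv_bottom_arc_new : bottom_arc T' a' f' None (Some u).
Proof.
have v_nu := arc_head_neq_u uv_top.1.
split=> [|[z|] n m //= /orP [] /eqP ->]; first by rewrite /= eqxx orbT.
  by move=> /depth_is_subdiv_u -> /(depth_is_subdiv_old v_nu) ->.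
by move=> /depth_is_subdiv_u -> /depth_is_subdiv_u ->.
Qed.

Lemma subdiv_old_arc x y : (x, y) <> (u, v) -> a x y -> a' (Some x) (Some y).
Proof.
move=> xy_neq axy; rewrite /= axy; apply/negP => /andP [/eqP ex /eqP ey].
by apply: xy_neq; rewrite ex ey.
Qed.

Lemma subdiv_out_arc x z : a' (Some x) z ->
  exists2 y, z = Some y & a x y /\ y != u.
Proof.
case: z => // y /andP [axy _]; exists y => //.
by split=> //; apply: arc_head_neq_u axy.
Qed.

Lemma subdiv_top_arc_old x y : (x, y) <> (u, v) -> top_arc T a f x y ->
  top_arc T' a' f' (Some x) (Some y).
Proof.
move=> xy_neq [axy y_top]; split; first exact: subdiv_old_arc.
move=> _ n m /subdiv_out_arc [z -> [axz z_nu]].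
have y_nu := arc_head_neq_u axy.
move=> /(depth_is_subdiv_old y_nu) -> /(depth_is_subdiv_old z_nu) ->.
by rewrite leq_double; apply: y_top axz (depthP HT _) (depthP HT _).
Qed.

Lemma subdiv_bottom_arc_old x y : (x, y) <> (u, v) -> bottom_arc T a f x y ->
  bottom_arc T' a' f' (Some x) (Some y).
Proof.
move=> xy_neq [axy y_bottom]; split; first exact: subdiv_old_arc.
move=> _ n m /subdiv_out_arc [z -> [axz z_nu]].
have y_nu := arc_head_neq_u axy.
move=> /(depth_is_subdiv_old y_nu) -> /(depth_is_subdiv_old z_nu) ->.
by rewrite leq_double; apply: y_bottom axz (depthP HT _) (depthP HT _).
Qed.

End TopSubdivision.

Theorem lemma3p7 (B : finType) (T : burling_tree B) (V : finType) (a : rel V)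
    (f : V -> B) (u v : V) :
  is_burling_tree T ->
  oriented a ->
  derived_via T a f ->
  top_arc T a f u v ->
  is_source a u ->
  exists (B' : finType) (T' : burling_tree B') (f' : option V -> B'),
    [/\ is_burling_tree T',
        derived_via T' (top_subdivide a u v) f',
        top_arc T' (top_subdivide a u v) f' None (Some v),
        bottom_arc T' (top_subdivide a u v) f' None (Some u) &
        (forall x y, (x, y) <> (u, v) -> top_arc T a f x y ->
           top_arc T' (top_subdivide a u v) f' (Some x) (Some y)) /\
        (forall x y, (x, y) <> (u, v) -> bottom_arc T a f x y ->
           bottom_arc T' (top_subdivide a u v) f' (Some x) (Some y))].
Proof.
move=> HT _ Hf uv_top u_source.
have [Q HQ] := fin_all_exists (c_branch_seq HT).
have fv_cu : f v \in bt_c T (f u) by rewrite -Hf.2; apply: uv_top.1.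
have [P u_par] := c_nonempty_par HT fv_cu.
have [r1 [r2 Q_u]] : exists r1 r2, Q (f u) = r1 ++ f v :: r2.
  by move: fv_cu; rewrite (HQ _).1 inE => /splitPr [r1 r2]; exists r1, r2.
exists _, (subdiv_tree T f v Q P r1 r2), (subdiv_map f u v P); split.
- exact: (subdiv_tree_burling HT HQ u_par Q_u).
- exact: (subdiv_derived HT Hf uv_top u_source HQ u_par Q_u).
- exact: (subdiv_top_arc_new HT uv_top u_source).
- exact: (subdiv_bottom_arc_new HT uv_top u_source).
- split=> x y; first exact: (subdiv_top_arc_old HT u_source).
  exact: (subdiv_bottom_arc_old HT u_source).
Qed.
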